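(* Let $(X,d_X)$ be a metric space. If $C<1$ and $D\in[0,\infty)$ are such that $\Delta_X^{(c)}(R)\leq CR+D$ for all $R\in[0,\infty)$, then $\mathrm{diam}(X)\leq\frac{D}{1-C}$.
   Context: For a cover $\mathcal{U}$ of $X$: $\mathrm{diam}(\mathcal{U})=\sup_{U\in\mathcal{U}}\mathrm{diam}(U)$; $\mathcal{L}(\mathcal{U})=\sup\{d\in[0,\infty): \text{every } E\subseteq X \text{ with } \mathrm{diam}(E)<d \text{ is contained in some } U\in\mathcal{U}\}$; point-finite means each point lies in only finitely many members. $\Delta_X^{(c)}(R)=\inf\{\mathrm{diam}(\mathcal{U}): \mathcal{U} \text{ point-finite cover of } X,\ \mathcal{L}(\mathcal{U})\geq R\}$. *)

From mathcomp Require Import all_boot all_order all_algebra.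
From mathcomp Require Import all_classical all_reals ereal.
Set Implicit Arguments. Unset Strict Implicit. Unset Printing Implicit Defensive.
Import Order.TTheory GRing.Theory Num.Theory.
Local Open Scope classical_set_scope.
Local Open Scope ring_scope.

Section Defs.
Context {R : realType} {T : Type}.

Definition is_metric (d : T -> T -> R) : Prop :=
  (forall x y, 0 <= d x y) /\
  (forall x y, d x y = 0 <-> x = y) /\
  (forall x y, d x y = d y x) /\
  (forall x y z, d x z <= d x y + d y z).

(* diameter of a subset, in [0, +oo]; convention diam(empty) = 0 *)
Definition mdiam (d : T -> T -> R) (E : set T) : \bar R :=
  ereal_sup ([set (d x y)%:E | x in E & y in E] `|` [set 0%E]).

Definition cover_diam (d : T -> T -> R) (U : set (set T)) : \bar R :=
  ereal_sup ([set mdiam d A | A in U] `|` [set 0%E]).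

Definition lebesgue_number (d : T -> T -> R) (U : set (set T)) : \bar R :=
  ereal_sup [set r%:E | r in [set r : R | 0 <= r /\
      forall E : set T, (mdiam d E < r%:E)%E -> exists2 A, U A & E `<=` A]].

Definition is_cover (U : set (set T)) : Prop := forall x : T, exists2 A, U A & A x.

Definition point_finite (U : set (set T)) : Prop :=
  forall x : T, finite_set [set A | U A /\ A x].

Definition Delta_c (d : T -> T -> R) (r : R) : \bar R :=
  ereal_inf [set cover_diam d U | U in [set U : set (set T) |
     is_cover U /\ point_finite U /\ (r%:E <= lebesgue_number d U)%E]].
End Defs.

(** Two points at distance [d x y < r] form a set of diameter [d x y] below
    the Lebesgue number of any cover admissible for [Delta_c d r], so some
    member of the cover contains both points; hence [d x y <= Delta_c d r].
    Combined with the hypothesis this gives [d x y <= C r + D] for every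
    [r > d x y], and letting [r] decrease to [d x y] yields
    [d x y <= D / (1 - C)]. *)
From mathcomp Require Import all_boot all_order all_algebra.
From mathcomp Require Import all_classical all_reals ereal.
From mathcomp Require Import lra.
Import Order.TTheory GRing.Theory Num.Theory.
Local Open Scope classical_set_scope.
Local Open Scope ring_scope.

Lemma le_affine_fixpoint {F : realFieldType} (a C D : F) : C < 1 ->
  (forall r, a < r -> a <= C * r + D) -> a <= D / (1 - C).
Proof.
move=> C_lt1 a_le; rewrite ler_pdivlMr ?subr_gt0 //.
have [C_le0 | C_gt0] := lerP C 0.
  by have := a_le (a + 1); rewrite ltrDl ltr01 => /(_ isT); nra.
apply/ler_addgt0Pr => e e_gt0.
have := a_le (a + e / C); rewrite ltrDl divr_gt0 // => /(_ isT).
by rewrite mulrDr mulrCA divff ?gt_eqF // mulr1; lra.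
Qed.

Section CoverDiameters.
Context {R : realType} {T : Type} {d : T -> T -> R}.
Local Open Scope ereal_scope.

Lemma mdiam_ge (E : set T) x y : E x -> E y -> (d x y)%:E <= mdiam d E.
Proof.
by move=> Ex Ey; apply: ereal_sup_ubound; left; exists x => //; exists y.
Qed.

Lemma mdiam_pair x y : is_metric d -> mdiam d [set x; y] = (d x y)%:E.
Proof.
move=> [d_ge0 [d_eq0 [d_sym _]]]; apply/eqP; rewrite eq_le.
rewrite mdiam_ge /=; [|by left|by right]; rewrite andbT.
have d_xx z : d z z = 0%R by apply/d_eq0.
apply: ge_ereal_sup => _ [[a a_xy [b b_xy <-]] | ->]; last by rewrite lee_fin.
by rewrite lee_fin; case: a_xy b_xy => -> [] ->; rewrite ?d_xx ?d_ge0 // d_sym.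
Qed.

Lemma mdiam_le_cover_diam {U : set (set T)} {A} :
  U A -> mdiam d A <= cover_diam d U.
Proof. by move=> UA; apply: ereal_sup_ubound; left; exists A. Qed.

Lemma lebesgue_number_covers (U : set (set T)) (E : set T) :
  mdiam d E < lebesgue_number d U -> exists2 A, U A & E `<=` A.
Proof.
by move=> /ereal_sup_gt[_ [r [_ U_leb] <-]]; exact: U_leb.
Qed.

Lemma dist_le_Delta_c {x y} {r : R} : is_metric d ->
  (d x y < r)%R -> (d x y)%:E <= Delta_c d r.
Proof.
move=> d_metric dxy_lt_r.
apply: le_ereal_inf_tmp => _ [U [_ [_ r_le_leb]] <-].
have [A UA xyA] : exists2 A, U A & [set x; y] `<=` A.
  apply: lebesgue_number_covers; rewrite mdiam_pair //.
  by apply: lt_le_trans r_le_leb; rewrite lte_fin.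
apply: le_trans (mdiam_le_cover_diam UA).
by apply: mdiam_ge; apply: xyA; [left | right].
Qed.

End CoverDiameters.

Theorem lemma3p5 (R : realType) (T : Type) (d : T -> T -> R)
  (hd : is_metric d) (C D : R) (hC : C < 1) (hD : 0 <= D)
  (hDelta : forall r : R, 0 <= r -> (Delta_c d r <= (C * r + D)%:E)%E) :
  (mdiam d [set: T] <= (D / (1 - C))%:E)%E.
Proof.
have [d_ge0 _] := hd.
apply: ge_ereal_sup => _ [[x _ [y _ <-]] | ->].
  rewrite lee_fin; apply: le_affine_fixpoint => // r dxy_lt_r.
  rewrite -lee_fin; apply: le_trans (dist_le_Delta_c hd dxy_lt_r) _.
  by apply: hDelta; apply: le_trans (ltW dxy_lt_r).
by rewrite lee_fin divr_ge0 // subr_ge0 ltW.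
Qed.
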